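(* Let $G$ be a cubic graph of order $2n\geq 8$. If there exist a perfect matching $M$ of $G$ and a matching $N$ of $G$ with $|N|=n-1$ such that $M\cap N=\emptyset$, then $\chi'_{[n-1]}(G)=4$.
   Context: All graphs are finite, simple (no loops, no parallel edges), connected and cubic. For a positive integer $k$, a $[k]$-matching of $G$ is a matching of $G$ with exactly $k$ edges. The excessive $[k]$-index $\chi'_{[k]}(G)$ is the minimum number of $[k]$-matchings of $G$ whose union is $E(G)$; if some edge of $G$ lies in no $[k]$-matching, one sets $\chi'_{[k]}(G)=\infty$. *)

From mathcomp Require Import all_boot.
Set Implicit Arguments. Unset Strict Implicit. Unset Printing Implicit Defensive.

Definition simple_graph (T : finType) (adj : rel T) : Prop :=
  symmetric adj /\ irreflexive adj.

Definition connected_graph (T : finType) (adj : rel T) : Prop :=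
  forall x y : T, connect adj x y.

Definition cubic (T : finType) (adj : rel T) : Prop :=
  forall x : T, #|[set y | adj x y]| = 3.

Definition edges (T : finType) (adj : rel T) : {set {set T}} :=
  [set e | [exists x, exists y, adj x y && (e == [set x; y])]].

Definition matching (T : finType) (adj : rel T) (F : {set {set T}}) : Prop :=
  F \subset edges adj /\
  (forall e1 e2, e1 \in F -> e2 \in F -> e1 != e2 -> [disjoint e1 & e2]).

Definition perfect_matching (T : finType) (adj : rel T) (F : {set {set T}}) : Prop :=
  matching adj F /\ (forall x : T, exists2 e, e \in F & x \in e).

Definition k_matching (T : finType) (adj : rel T) (k : nat) (F : {set {set T}}) : Prop :=
  matching adj F /\ #|F| = k.

Definition k_cover (T : finType) (adj : rel T) (k : nat) (Ms : seq {set {set T}}) : Prop :=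
  (forall F, F \in Ms -> k_matching adj k F) /\
  \bigcup_(F <- Ms) F = edges adj.

(* chi'_[k](G) = m : m is the minimum number of [k]-matchings whose union is
   E(G) (in particular such a cover exists, so the index is finite). *)
Definition excessive_index_eq (T : finType) (adj : rel T) (k m : nat) : Prop :=
  (exists Ms, size Ms = m /\ k_cover adj k Ms) /\
  (forall Ms, k_cover adj k Ms -> m <= size Ms).

(* Lower bound: G has 3n edges, and three [n-1]-matchings cover at most
   3n - 3 of them ([four_le_cover]).

   Upper bound. Encode M and N by involutions [mu], [nu] ([config]). Every
   edge is an M-edge, an N-edge or a "residual" edge; each vertex other than
   p, q has exactly one residual neighbour [rho x], while p and q have two.
   For a chosen M-edge {a, mu a}, the four matchings are N, M - {a, mu a}
   and two [n-1]-matchings K3, K4 covering {a, mu a} together with all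
   residual edges ([cover_of_two_matchings]). Each of K3, K4 is a "patch": a
   short explicit list of edges through p and q, completed by residual edges
   on all other vertices but two chosen ones ([patch_matching],
   [two_patch_cover]). Such patches are exhibited, by a finite case analysis,
   whenever p has a "good" residual neighbour a ([good_vertex_cover]). When
   no good vertex exists, either q or a modified matching N (swapping one
   edge at p) has one; connectivity rules out the only obstruction
   ([config_cover]). *)

From mathcomp Require Import all_boot zify.
Set Implicit Arguments. Unset Strict Implicit. Unset Printing Implicit Defensive.

Definition four_cover (T : finType) (adj : rel T) (k : nat) : Prop :=
  exists Ms, size Ms = 4 /\ k_cover adj k Ms.

Section GraphBasics.
Variables (T : finType) (adj : rel T).
Hypothesis adj_sym : symmetric adj.
Hypothesis adj_irr : irreflexive adj.

Lemma set2C (x y : T) : [set x; y] = [set y; x].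
Proof. by rewrite setUC. Qed.

Lemma edgeP x y : adj x y -> [set x; y] \in edges adj.
Proof.
by move=> h; rewrite inE; apply/existsP; exists x; apply/existsP; exists y; rewrite h eqxx.
Qed.

Lemma edgesP e : e \in edges adj -> exists x y, adj x y /\ e = [set x; y].
Proof. by rewrite inE => /existsP[x /existsP[y /andP[h /eqP ->]]]; exists x, y. Qed.

Lemma adj_neq x y : adj x y -> x != y.
Proof. by apply: contraTneq => ->; rewrite adj_irr. Qed.

Lemma card_edge e : e \in edges adj -> #|e| = 2.
Proof. by move/edgesP=> [x [y [h ->]]]; rewrite cards2 adj_neq. Qed.

Lemma matching_partner_uniq (F : {set {set T}}) (x y z : T) :
  matching adj F -> [set x; y] \in F -> [set x; z] \in F -> x != y -> y = z.
Proof.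
move=> [_ Fd] h1 h2 xy.
case: (eqVneq [set x; y] [set x; z]) => [e|ne].
  have : y \in [set x; z] by rewrite -e !inE eqxx orbT.
  by rewrite !inE => /orP[/eqP e'|/eqP //]; rewrite e' eqxx in xy.
by have := Fd _ _ h1 h2 ne; rewrite -setI_eq0 => /eqP/setP/(_ x); rewrite !inE !eqxx.
Qed.

Lemma card_cover (F : {set {set T}}) : matching adj F -> #|cover F| = 2 * #|F|.
Proof.
move=> Fm; rewrite mulnC; apply: card_uniform_partition.
  by move=> e eF; apply: card_edge (subsetP Fm.1 _ eF).
apply/and3P; split => //; first by apply/trivIsetP => A B hA hB; apply: Fm.2.
by apply/negP => h0; have := card_edge (subsetP Fm.1 _ h0); rewrite cards0.
Qed.

Lemma involution_matching (D : {set T}) (f : T -> T) :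
  (forall t, t \in D -> f t \in D) -> (forall t, t \in D -> f (f t) = t) ->
  (forall t, t \in D -> adj t (f t)) ->
  matching adj [set [set t; f t] | t in D] /\
  2 * #|[set [set t; f t] | t in D]| = #|D|.
Proof.
move=> fD ff fa.
have key t c : t \in D -> c \in [set t; f t] -> [set t; f t] = [set c; f c].
  by move=> tD; rewrite !inE => /orP[/eqP->|/eqP->] //; rewrite ff // set2C.
have mat : matching adj [set [set t; f t] | t in D].
  split; first by apply/subsetP=> e /imsetP[t tD ->]; apply: edgeP (fa t tD).
  move=> e1 e2 /imsetP[t1 t1D ->] /imsetP[t2 t2D ->] ne.
  rewrite -setI_eq0; apply/eqP/setP=> c; rewrite in_setI in_set0.
  by apply/negP => /andP[c1 c2]; move: ne; rewrite (key _ _ t1D c1) (key _ _ t2D c2) eqxx.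
split=> //; rewrite -card_cover //; apply: eq_card => c.
apply/bigcupP/idP => [[e /imsetP[t tD ->]]|cD].
  by rewrite !inE => /orP[/eqP->|/eqP->] //; apply: fD.
by exists [set c; f c]; [apply: imset_f | rewrite !inE eqxx].
Qed.

Section Mate.
Variable F : {set {set T}}.
Hypothesis Fm : matching adj F.

(* The partner of [x] in the matching [F] (and [x] itself if [x] is uncovered). *)
Definition mate x := odflt x [pick y | adj x y && ([set x; y] \in F)].

Lemma mateP x : x \in cover F -> adj x (mate x) && ([set x; mate x] \in F).
Proof.
move=> /bigcupP[e eF xe]; rewrite /mate; case: pickP => [y //|none].
have /edgesP [u [v [huv ee]]] := subsetP Fm.1 e eF.
move: xe; rewrite ee !inE => /orP[/eqP xu|/eqP xv].
  by move: (none v); rewrite xu huv -ee eF.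
by move: (none u); rewrite xv adj_sym huv set2C -ee eF.
Qed.

Lemma mate_cover x : x \in cover F -> mate x \in cover F.
Proof.
move=> /mateP/andP[_ h]; apply/bigcupP; exists [set x; mate x] => //.
by rewrite !inE eqxx orbT.
Qed.

Lemma mate_inv x : x \in cover F -> mate (mate x) = x.
Proof.
move=> xF; have /andP[ax hx] := mateP xF.
have /andP[_ hx'] := mateP (mate_cover xF).
apply/esym; apply: (matching_partner_uniq Fm _ hx'); first by rewrite set2C.
by apply: adj_neq; rewrite adj_sym.
Qed.

End Mate.

Lemma exists_notin (s : seq T) : size s < #|T| -> exists c, c \notin s.
Proof.
move=> h; case: (pickP (fun c => c \notin s)) => [c hc|none]; first by exists c.
have : #|T| <= size s.
  apply: leq_trans (card_size s); apply: subset_leq_card; apply/subsetP => x _.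
  by have := none x => /negbFE.
by rewrite leqNgt h.
Qed.

Lemma connected_leaves (S : seq T) u : connected_graph adj -> u \in S -> size S < #|T| ->
  exists x y, [/\ x \in S, adj x y & y \notin S].
Proof.
move=> conn uS sS; have [c cS] := exists_notin sS.
have [/existsP[x /existsP[y /and3P[xS axy yS]]]|none] :=
  boolP [exists x, exists y, [&& x \in S, adj x y & y \notin S]]; first by exists x, y.
have clo : closed adj (mem S).
  move=> x y axy; apply/idP/idP => h; apply/negPn/negP => nh; apply: (negP none).
    by apply/existsP; exists x; apply/existsP; exists y; rewrite h axy nh.
  by apply/existsP; exists y; apply/existsP; exists x; rewrite h adj_sym axy nh.
by move: (closed_connect clo (conn u c)); rewrite /= uS (negbTE cS).
Qed.

Hypothesis cub : cubic adj.

Lemma card_edges : 2 * #|edges adj| = 3 * #|T|.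
Proof.
have deg x : #|[set e in edges adj | x \in e]| = 3.
  rewrite -(cub x); set Nb := [set y | adj x y].
  have ->: [set e in edges adj | x \in e] = [set [set x; y] | y in Nb].
    apply/setP=> e; rewrite inE; apply/andP/imsetP => [[/edgesP[u [v [h ->]]] xe]|[y]].
      move: xe h; rewrite !inE => /orP[/eqP<-|/eqP<-] h; first by exists v; rewrite /Nb ?inE.
      by exists u; [rewrite /Nb inE adj_sym | rewrite set2C].
    by rewrite /Nb inE => h ->; split; [apply: edgeP | rewrite !inE eqxx].
  rewrite card_in_imset // => y z; rewrite /Nb !inE => hy hz /setP/(_ y).
  rewrite !inE eqxx orbT => /esym/orP[/eqP e|/eqP //].
  by move: hy; rewrite e adj_irr.
have dbl : \sum_(e in edges adj) #|e| = \sum_(x : T) #|[set e in edges adj | x \in e]|.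
  transitivity (\sum_(e in edges adj) \sum_(x in e) 1).
    by apply: eq_bigr => e _; rewrite sum1_card.
  rewrite (exchange_big_dep xpredT) //=; apply: eq_bigr => x _.
  by rewrite -sum1_card; apply: eq_bigl => e; rewrite inE.
have lhs : \sum_(e in edges adj) #|e| = #|edges adj| * 2.
  by rewrite -sum_nat_const; apply: eq_bigr => e /card_edge.
have rhs : \sum_(x : T) #|[set e in edges adj | x \in e]| = #|T| * 3.
  by rewrite -sum_nat_const; apply: eq_bigr => x _; rewrite deg.
lia.
Qed.

Lemma cover_size k Ms : k_cover adj k Ms -> #|edges adj| <= size Ms * k.
Proof.
case=> hk <-; elim: Ms hk => [|F Ms IH] hk; first by rewrite big_nil cards0.
rewrite big_cons /= mulSn; have [_ hF] := hk F (mem_head _ _).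
apply: leq_trans (leq_card_setU _ _).1 _; rewrite hF leq_add2l.
by apply: IH => G hG; apply: hk; rewrite inE hG orbT.
Qed.

Lemma four_le_cover n Ms :
  #|T| = 2 * n -> 4 <= n -> k_cover adj (n - 1) Ms -> 4 <= size Ms.
Proof.
move=> cardT n4 /cover_size hc; have := card_edges; rewrite cardT => he.
rewrite leqNgt; apply/negP => hm.
have : size Ms * (n - 1) <= 3 * (n - 1) by apply: leq_mul => //; rewrite -ltnS.
lia.
Qed.

End GraphBasics.

(* Lists of ordered pairs read as partial involutions: [partner L t] is the
   vertex paired with [t] in [L], if any; [flatL L] lists all paired vertices. *)
Section Partner.
Variable (T : eqType).
Fixpoint partner (L : seq (T * T)) (t : T) : option T :=
  if L is xy :: L' then
    (if t == xy.1 then Some xy.2 else if t == xy.2 then Some xy.1 else partner L' t)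
  else None.
Definition flatL (L : seq (T * T)) := flatten [seq [:: xy.1; xy.2] | xy <- L].

Lemma flatL_cons x y L : flatL ((x, y) :: L) = x :: y :: flatL L.
Proof. by []. Qed.

Lemma partner_in L t y : partner L t = Some y -> (t \in flatL L) && (y \in flatL L).
Proof.
elim: L => [|[x0 y0] L IH] //; rewrite flatL_cons /= !inE.
case: (t =P x0) => [->|_]; first by case=> <-; rewrite !eqxx ?orbT.
case: (t =P y0) => [->|_]; first by case=> <-; rewrite !eqxx ?orbT.
by move/IH/andP=> [-> ->]; rewrite !orbT.
Qed.

Lemma partner_none L t : partner L t = None -> t \notin flatL L.
Proof.
elim: L => [|[x0 y0] L IH] //; rewrite flatL_cons /= !inE.
case: (t =P x0) => // _; case: (t =P y0) => // _ /=; exact: IH.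
Qed.

Lemma partner_inv L t y : uniq (flatL L) -> partner L t = Some y -> partner L y = Some t.
Proof.
elim: L => [|[x0 y0] L IH] //; rewrite flatL_cons /= !inE => /and3P[/norP[xy xL] yL uL].
case: (t =P x0) => [->|tx].
  by case=> <-; rewrite eq_sym (negbTE xy) eqxx.
case: (t =P y0) => [->|ty]; first by case=> <-; rewrite eqxx.
move=> h; have /andP[_ yin] := partner_in h.
have -> : (y == x0) = false by apply/negbTE; apply: contraNneq xL => <-.
have -> : (y == y0) = false by apply/negbTE; apply: contraNneq yL => <-.
exact: IH.
Qed.

Lemma flatL_pair L x y : (x, y) \in L -> (x \in flatL L) && (y \in flatL L).
Proof.
elim: L => [|[a b] L IH] //; rewrite inE flatL_cons !inE.
by case/orP => [/eqP[-> ->]|/IH/andP[-> ->]]; rewrite ?eqxx ?orbT.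
Qed.

Lemma partner_mem L x y : uniq (flatL L) -> (x, y) \in L -> partner L x = Some y.
Proof.
elim: L => [|[x0 y0] L IH] //; rewrite flatL_cons /= !inE => /and3P[/norP[xy xL] yL uL].
case/orP => [/eqP[-> ->]|h]; first by rewrite eqxx.
have /andP[xin _] := flatL_pair h.
have -> : (x == x0) = false by apply/negbTE; apply: contraNneq xL => <-.
have -> : (x == y0) = false by apply/negbTE; apply: contraNneq yL => <-.
exact: IH.
Qed.

Lemma partner_pair L t y : partner L t = Some y ->
  exists2 xy, xy \in L & (xy = (t, y) \/ xy = (y, t)).
Proof.
elim: L => [|[x0 y0] L IH] //=.
case: (t =P x0) => [->|_]; first by case=> <-; exists (x0, y0); rewrite ?mem_head; auto.
case: (t =P y0) => [->|_]; first by case=> <-; exists (x0, y0); rewrite ?mem_head; auto.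
by move/IH => [xy h1 h2]; exists xy; rewrite // inE h1 orbT.
Qed.


End Partner.

Section Configuration.
Variables (T : finType) (adj : rel T).
Hypothesis adj_sym : symmetric adj.
Hypothesis adj_irr : irreflexive adj.
Hypothesis cub : cubic adj.

(* The data extracted from the hypotheses of the theorem: [mu] is the
   involution of a perfect matching [M]; [nu] is the involution of a matching
   [N] disjoint from [M] covering every vertex except [p] and [q] (where it is
   set to agree with [mu]). *)
Record config (mu nu : T -> T) (p q : T) : Prop := Config {
  cf_mu_adj : forall x, adj x (mu x);
  cf_mu_inv : forall x, mu (mu x) = x;
  cf_pq : p != q;
  cf_nu_adj : forall x, x != p -> x != q -> adj x (nu x);
  cf_nu_inv : forall x, x != p -> x != q -> nu (nu x) = x;
  cf_nu_p : nu p = mu p;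
  cf_nu_q : nu q = mu q;
  cf_nu_neq_p : forall x, x != p -> x != q -> nu x != p;
  cf_nu_neq_q : forall x, x != p -> x != q -> nu x != q;
  cf_nu_neq_mu : forall x, x != p -> x != q -> nu x != mu x }.

Lemma config_sym mu nu p q : config mu nu p q -> config mu nu q p.
Proof.
case=> h1 h2 h3 h4 h5 h6 h7 h8 h9 h10; split; rewrite 1?eq_sym //;
  by move=> x xq xp; auto.
Qed.

Section Residual.
Variables (mu nu : T -> T) (p q : T).
Hypothesis cfg : config mu nu p q.
Let mu_adj := cf_mu_adj cfg.
Let mu_inv := cf_mu_inv cfg.
Let pq := cf_pq cfg.
Let nu_adj := cf_nu_adj cfg.
Let nu_inv := cf_nu_inv cfg.
Let nu_p := cf_nu_p cfg.
Let nu_q := cf_nu_q cfg.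
Let nu_neq_p := cf_nu_neq_p cfg.
Let nu_neq_q := cf_nu_neq_q cfg.
Let nu_neq_mu := cf_nu_neq_mu cfg.

Definition resid x := [set y | adj x y] :\ mu x :\ nu x.

Lemma residP x y : (y \in resid x) = [&& y != nu x, y != mu x & adj x y].
Proof. by rewrite !inE. Qed.

Lemma resid_adj x y : y \in resid x -> adj x y.
Proof. by rewrite residP => /and3P[]. Qed.

Lemma resid_neq x y : y \in resid x -> x != y.
Proof. by move/resid_adj/(adj_neq adj_irr). Qed.

Lemma neighbour_cases t u : adj t u -> [\/ u = mu t, u = nu t | u \in resid t].
Proof.
move=> h; case: (u =P mu t) => [|/eqP um]; first by constructor 1.
case: (u =P nu t) => [|/eqP un]; first by constructor 2.
by constructor 3; rewrite residP un um h.
Qed.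

Lemma card_resid x : #|resid x| = if (x == p) || (x == q) then 2 else 1.
Proof.
have h3 := cub x; rewrite /cubic (cardsD1 (mu x)) inE mu_adj in h3.
have h2 : #|[set y | adj x y] :\ mu x| = 2 by move: h3; rewrite add1n; case.
rewrite /resid; rewrite (cardsD1 (nu x)) in h2; move: h2.
case: (x =P p) => [->|/eqP xp] /=; first by rewrite nu_p !inE eqxx.
case: (x =P q) => [->|/eqP xq] /=; first by rewrite nu_q !inE eqxx.
by rewrite !inE nu_neq_mu ?nu_adj // add1n; case.
Qed.

Lemma resid_sym x y : y \in resid x -> x \in resid y.
Proof.
rewrite !residP => /and3P[yn ym axy]; rewrite adj_sym axy andbT.
apply/andP; split; last by apply: contraNneq ym => ->; rewrite mu_inv.
apply/negP => /eqP e.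
case: (y =P p) => [yp|/eqP yp].
  by move: ym; rewrite e yp nu_p mu_inv eqxx.
case: (y =P q) => [yq|/eqP yq].
  by move: ym; rewrite e yq nu_q mu_inv eqxx.
by move: yn; rewrite e nu_inv // eqxx.
Qed.

Lemma resid_pair x a : (x == p) || (x == q) -> a \in resid x ->
  exists2 s, s != a & resid x = [set a; s].
Proof.
move=> hx ha; have : #|resid x :\ a| == 1.
  by have := card_resid x; rewrite hx (cardsD1 a) ha add1n => -[->].
case/cards1P => s hs; have : s \in resid x :\ a by rewrite hs set11.
rewrite in_setD1 => /andP[sa sR]; exists s => //.
apply/setP => y; rewrite in_set2; case: (eqVneq y a) => [->|ya] /=; first exact: ha.
by move/setP: hs => /(_ y); rewrite in_setD1 in_set1 ya.
Qed.

Lemma resid_pair_p a : a \in resid p -> exists2 s, s != a & resid p = [set a; s].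
Proof. by apply: resid_pair; rewrite eqxx. Qed.

Lemma resid_pair_q a : a \in resid q -> exists2 s, s != a & resid q = [set a; s].
Proof. by apply: resid_pair; rewrite eqxx orbT. Qed.

(* Outside [{p, q}], [rho x] is the unique residual neighbour of [x]. *)
Definition rho x := odflt x [pick y in resid x].

Lemma rhoE x : x != p -> x != q -> resid x = [set rho x].
Proof.
move=> xp xq; have : #|resid x| == 1 by rewrite card_resid (negbTE xp) (negbTE xq).
case/cards1P => r hr; rewrite /rho hr.
case: pickP => [y|h] /=; first by rewrite inE => /eqP->.
by have := h r; rewrite inE eqxx.
Qed.

Lemma rho_resid x : x != p -> x != q -> rho x \in resid x.
Proof. by move=> xp xq; rewrite rhoE // set11. Qed.

Lemma rho_adj x : x != p -> x != q -> adj x (rho x).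
Proof. by move=> xp xq; apply/resid_adj/rho_resid. Qed.

Lemma rho_of x y : x != p -> x != q -> y \in resid x -> rho x = y.
Proof. by move=> xp xq; rewrite rhoE // inE => /eqP. Qed.

Lemma rho_inv x : x != p -> x != q -> rho x != p -> rho x != q -> rho (rho x) = x.
Proof. by move=> xp xq rp rq; apply/rho_of/resid_sym/rho_resid. Qed.

Lemma rho_eq_resid x y : x != p -> x != q -> rho x = y -> x \in resid y.
Proof. by move=> xp xq <-; apply/resid_sym/rho_resid. Qed.


(* A residual neighbour of [p] is never a residual neighbour of [q]: it would
   have two residual neighbours without being [p] or [q]. *)
Lemma resid_disjoint x : x \in resid p -> x \notin resid q.
Proof.
move=> xp; apply/negP => xq.
have xnp : x != p by rewrite eq_sym resid_neq.
have xnq : x != q by rewrite eq_sym resid_neq.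
by move: pq; rewrite -(rho_of xnp xnq (resid_sym xp)) (rho_of xnp xnq (resid_sym xq)) eqxx.
Qed.

Variable n : nat.
Hypothesis cardT : #|T| = 2 * n.

Lemma card_setC2 (c d : T) : c != d -> #|[set~ c] :\ d| = 2 * n - 2.
Proof.
by move=> cd; have := cardsD1 d [set~ c]; rewrite cardsC1 cardT !inE eq_sym cd /=; lia.
Qed.

Lemma nu_matching : k_matching adj (n - 1) [set [set t; nu t] | t in [set~ p] :\ q].
Proof.
suff [mN cN] : matching adj [set [set t; nu t] | t in [set~ p] :\ q] /\
    2 * #|[set [set t; nu t] | t in [set~ p] :\ q]| = #|[set~ p] :\ q|.
  by split=> //; move: cN; rewrite card_setC2 //; set k := #|_|; lia.
by apply: (involution_matching adj_irr) => t; rewrite !inE => /andP[tq tp];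
  rewrite ?nu_neq_p ?nu_neq_q ?nu_inv ?nu_adj.
Qed.

Lemma mu_matching a : k_matching adj (n - 1) [set [set t; mu t] | t in [set~ a] :\ mu a].
Proof.
have am : a != mu a by apply: (adj_neq adj_irr).
have mD t : t \in [set~ a] :\ mu a -> mu t \in [set~ a] :\ mu a.
  rewrite !inE => /andP[t1 t2]; apply/andP; split.
    by apply: contra t2 => /eqP/(congr1 mu); rewrite !mu_inv => ->.
  by apply: contra t1 => /eqP <-; rewrite mu_inv.
have [mM cM] := involution_matching adj_irr mD (fun t _ => mu_inv t) (fun t _ => mu_adj t).
by split=> //; move: cM; rewrite card_setC2 //; set k := #|_|; lia.
Qed.

(* The theorem follows once two [(n-1)]-matchings [K3], [K4] cover one
   [M]-edge [{a, mu a}] and all residual edges: the other two matchings are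
   [N] and [M] minus [{a, mu a}]. *)
Lemma cover_of_two_matchings (a : T) (K3 K4 : {set {set T}}) :
  k_matching adj (n - 1) K3 -> k_matching adj (n - 1) K4 ->
  [set a; mu a] \in K3 :|: K4 ->
  (forall y, y \in resid p -> [set p; y] \in K3 :|: K4) ->
  (forall y, y \in resid q -> [set q; y] \in K3 :|: K4) ->
  (forall x, x != p -> x != q -> rho x != p -> rho x != q -> [set x; rho x] \in K3 :|: K4) ->
  four_cover adj (n - 1).
Proof.
move=> h3 h4 ha hP hQ hZ.
have [h1 h2] := (nu_matching, mu_matching a).
set K1 := [set [set t; nu t] | t in _] in h1; set K2 := [set [set t; mu t] | t in _] in h2.
exists [:: K1; K2; K3; K4]; split=> //; split.
  by move=> F; rewrite !inE => /or4P[]/eqP->.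
have inU e : e \in K3 :|: K4 -> e \in K1 :|: (K2 :|: (K3 :|: K4)).
  by move=> h; rewrite !inE in h *; rewrite h !orbT.
apply/eqP; rewrite eqEsubset !big_cons big_nil setU0; apply/andP; split.
  by rewrite !subUset h1.1.1 h2.1.1 h3.1.1 h4.1.1.
apply/subsetP => e /edgesP [x [y [axy ->]]].
have Medge t : [set t; mu t] \in K1 :|: (K2 :|: (K3 :|: K4)).
  have [->|nxa] := eqVneq t a; first exact: inU.
  have [ex|nxm] := eqVneq t (mu a); first by rewrite ex mu_inv set2C; apply: inU.
  by apply/setUP; right; apply/setUP; left; apply: imset_f; rewrite !inE nxm nxa.
case: (neighbour_cases axy) => [->|ey|yR]; first exact: Medge.
  have [ex|xp] := eqVneq x p; first by rewrite ey ex nu_p.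
  have [ex|xq] := eqVneq x q; first by rewrite ey ex nu_q.
  by rewrite ey; apply/setUP; left; apply: imset_f; rewrite !inE xp xq.
have [ex|xp] := eqVneq x p; first by rewrite ex; apply/inU/hP; rewrite -ex.
have [ex|xq] := eqVneq x q; first by rewrite ex; apply/inU/hQ; rewrite -ex.
rewrite -(rho_of xp xq yR).
have [rp|rp] := eqVneq (rho x) p; first by rewrite rp set2C; apply/inU/hP/rho_eq_resid.
have [rq|rq] := eqVneq (rho x) q; first by rewrite rq set2C; apply/inU/hQ/rho_eq_resid.
exact/inU/hZ.
Qed.

Section Patches.
Variables u1 u2 v1 v2 : T.
Hypothesis Rp : resid p = [set u1; u2].
Hypothesis Rq : resid q = [set v1; v2].

Definition rho_closed (S : seq T) : bool :=
  [&& p \in S, q \in S, all (mem S) [:: u1; u2; v1; v2] &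
      all (fun x => (x != p) ==> (x != q) ==> (rho x \in S)) S].

Lemma rho_closed_out S t : rho_closed S -> t \notin S ->
  [/\ t != p, t != q, rho t \notin S & rho (rho t) = t].
Proof.
case/and4P => pS qS /allP uS /allP clS tS.
have tp : t != p by apply: contraNneq tS => ->.
have tq : t != q by apply: contraNneq tS => ->.
have subp : {subset resid p <= S}.
  by move=> x; rewrite Rp !inE => /orP[]/eqP->; apply: uS; rewrite !inE eqxx ?orbT.
have subq : {subset resid q <= S}.
  by move=> x; rewrite Rq !inE => /orP[]/eqP->; apply: uS; rewrite !inE eqxx ?orbT.
have rS : rho t \notin S.
  apply/negP => rS.
  have [rp|rp] := eqVneq (rho t) p; first by rewrite (subp _ (rho_eq_resid tp tq rp)) in tS.
  have [rq|rq] := eqVneq (rho t) q; first by rewrite (subq _ (rho_eq_resid tp tq rq)) in tS.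
  by move: (clS _ rS); rewrite rp rq rho_inv // (negbTE tS).
by split=> //; apply: rho_inv => //; apply: contraNneq rS => ->.
Qed.

Definition patch (L : seq (T * T)) t := if partner L t is Some y then y else rho t.

(* Conditions under which the patch of [L] is a perfect matching of the
   graph minus the two vertices [m1], [m2]. *)
Definition patch_ok (L : seq (T * T)) (m1 m2 : T) : bool :=
  [&& uniq (m1 :: m2 :: flatL L), p \in flatL L, q \in flatL L,
      all (fun xy => adj xy.1 xy.2) L & rho_closed (m1 :: m2 :: flatL L)].

Definition patch_set L m1 m2 := [set [set t; patch L t] | t in [set~ m1] :\ m2].

Lemma patch_involution L m1 m2 : patch_ok L m1 m2 ->
  [/\ forall t, t \in [set~ m1] :\ m2 -> patch L t \in [set~ m1] :\ m2,
      forall t, t \in [set~ m1] :\ m2 -> patch L (patch L t) = t &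
      forall t, t \in [set~ m1] :\ m2 -> adj t (patch L t)].
Proof.
case/and5P => uX pL qL /allP Ladj clX.
move: (uX); rewrite /= !inE => /and3P[/norP[m12 m1L] m2L uL].
have flD t : t \in flatL L -> t \in [set~ m1] :\ m2.
  by move=> tL; rewrite !inE; apply/andP; split; apply: contraTneq tL => ->.
have DX t : t \in [set~ m1] :\ m2 -> t \notin flatL L -> t \notin m1 :: m2 :: flatL L.
  by rewrite !inE => /andP[t2 t1] /negbTE ->; rewrite (negbTE t1) (negbTE t2).
split=> t tD; rewrite /patch; case E: (partner L t) => [y|].
- by apply: flD; case/andP: (partner_in E).
- have [_ _ rX _] := rho_closed_out clX (DX _ tD (partner_none E)).
  by move: rX; rewrite /= !inE => /norP[r1 /norP[r2 _]]; rewrite r1 r2.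
- by rewrite (partner_inv uL E).
- have [_ _ rX rr] := rho_closed_out clX (DX _ tD (partner_none E)).
  case E2: (partner L (rho t)) => [z|] //; move: rX.
  by case/andP: (partner_in E2) => h _; rewrite /= !inE h !orbT.
- have [[x y'] xyL [[<- <-]|[<- <-]]] := partner_pair E; have := Ladj _ xyL => //=.
  by rewrite adj_sym.
- by have [tp tq _ _] := rho_closed_out clX (DX _ tD (partner_none E)); apply: rho_adj.
Qed.

Lemma patch_matching L m1 m2 : patch_ok L m1 m2 ->
  [/\ k_matching adj (n - 1) (patch_set L m1 m2),
      forall x y, (x, y) \in L -> [set x; y] \in patch_set L m1 m2 &
      forall t, t \notin m1 :: m2 :: flatL L -> [set t; rho t] \in patch_set L m1 m2].
Proof.
move=> ok; have [fD ff fa] := patch_involution ok.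
case/and5P: ok => uX _ _ _ _; move: (uX); rewrite /= !inE => /and3P[/norP[m12 m1L] m2L uL].
have [mat card] := involution_matching adj_irr fD ff fa.
split.
- split=> //; move: card; rewrite card_setC2 //.
  by set k := #|_|; lia.
- move=> x y h; have <- : patch L x = y by rewrite /patch (partner_mem uL h).
  have /andP[xL _] := flatL_pair h.
  by apply: imset_f; rewrite !inE; apply/andP; split; apply: contraTneq xL => ->.
move=> t tX; have tD : t \in [set~ m1] :\ m2.
  by move: tX; rewrite /= !inE => /norP[t1 /norP[t2 _]]; rewrite t1 t2.
suff -> : rho t = patch L t by apply: imset_f.
rewrite /patch; case E: (partner L t) => [y|] //.
by move: tX; case/andP: (partner_in E) => h _; rewrite /= !inE h !orbT.
Qed.

Definition covers (L : seq (T * T)) x y := ((x, y) \in L) || ((y, x) \in L).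

Lemma two_patch_cover a L m1 m2 L' m1' m2' :
  patch_ok L m1 m2 -> patch_ok L' m1' m2' ->
  all (fun e => covers (L ++ L') e.1 e.2)
    [:: (a, mu a); (p, u1); (p, u2); (q, v1); (q, v2)] ->
  all (fun x => (x \in m1' :: m2' :: flatL L') ==> (x != p) ==> (x != q) ==>
                (rho x != p) ==> (rho x != q) ==> covers (L ++ L') x (rho x))
    (m1 :: m2 :: flatL L) ->
  four_cover adj (n - 1).
Proof.
move=> ok ok' /allP hE /allP hX.
have [K inL outL] := patch_matching ok.
have [K' inL' outL'] := patch_matching ok'.
have cov x y : covers (L ++ L') x y ->
    [set x; y] \in patch_set L m1 m2 :|: patch_set L' m1' m2'.
  have one u v : (u, v) \in L ++ L' ->
      [set u; v] \in patch_set L m1 m2 :|: patch_set L' m1' m2'.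
    by rewrite mem_cat inE => /orP[/inL ->|/inL' ->]; rewrite ?orbT.
  by case/orP => /one; rewrite // set2C.
have covE e : e \in [:: (a, mu a); (p, u1); (p, u2); (q, v1); (q, v2)] ->
    [set e.1; e.2] \in patch_set L m1 m2 :|: patch_set L' m1' m2'.
  by move/hE/cov.
apply: (cover_of_two_matchings (a := a) K K').
- by apply: (covE (a, mu a)); rewrite inE eqxx.
- by move=> y; rewrite Rp in_set2 => /orP[]/eqP->;
    [apply: (covE (p, u1)) | apply: (covE (p, u2))]; rewrite !inE eqxx ?orbT.
- by move=> y; rewrite Rq in_set2 => /orP[]/eqP->;
    [apply: (covE (q, v1)) | apply: (covE (q, v2))]; rewrite !inE eqxx ?orbT.
move=> x xp xq rp rq.
have [xX|xX] := boolP (x \in m1 :: m2 :: flatL L); last by apply/setUP; left; apply: outL.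
have [xX'|xX'] := boolP (x \in m1' :: m2' :: flatL L'); last by apply/setUP; right; apply: outL'.
by apply: cov; have := hX x xX; rewrite xX' xp xq rp rq.
Qed.

Hypothesis n4 : 4 <= n.

Lemma fresh_resid_edge S : size S <= 6 -> rho_closed S ->
  exists c c', [/\ c \notin S, c' \notin S, adj c c', rho c = c' & rho c' = c].
Proof.
move=> sS clS.
have [c cS] : exists c, c \notin S by apply: exists_notin; rewrite cardT; lia.
have [cp cq c'S rr] := rho_closed_out clS cS.
by exists c, (rho c); split => //; apply: rho_adj.
Qed.

End Patches.

Ltac settle := rewrite /patch_ok /rho_closed /covers /= ?inE /=;
  repeat match goal with
  | H : is_true (?x != ?y) |- context [?x == ?y] => rewrite (negbTE H)
  | H : is_true (?x != ?y) |- context [?y == ?x] => rewrite [y == x]eq_sym (negbTE H)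
  | H : is_true (adj ?x ?y) |- context [adj ?x ?y] => rewrite H
  | H : rho ?x = ?y |- context [rho ?x] => rewrite H
  end; rewrite ?eqxx /= ?orbT ?andbT ?orbF; done.

Ltac notin_list H := rewrite /= ?inE in H; repeat (case/norP: H => ? H).

Lemma rho_off x : x != p -> x != q -> x \notin resid p -> x \notin resid q ->
  [/\ rho x != p, rho x != q, rho (rho x) = x & adj x (rho x)].
Proof.
move=> xp xq xRp xRq.
have rp : rho x != p by apply: contraNneq xRp => /(rho_eq_resid xp xq).
have rq : rho x != q by apply: contraNneq xRq => /(rho_eq_resid xp xq).
by split => //; [apply: rho_inv | apply: rho_adj].
Qed.

Section GoodVertex.
Hypothesis n4 : 4 <= n.
(* A residual neighbour [a] of [p] is good if neither [a] nor [mu a] is [q]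
   and [mu a] is not the other residual neighbour of [p]. *)
Variable a : T.
Hypothesis aR : a \in resid p.
Hypothesis aq : a != q.
Hypothesis bq : mu a != q.
Hypothesis bR : mu a \notin resid p.

Let ap : a != p. Proof. by rewrite eq_sym resid_neq. Qed.
Let rap : rho a = p. Proof. exact: rho_of ap aq (resid_sym aR). Qed.
Let adj_pa : adj p a. Proof. exact: resid_adj aR. Qed.
Let adj_ap : adj a p. Proof. by rewrite adj_sym. Qed.
Let adj_ab : adj a (mu a). Proof. exact: mu_adj. Qed.
Let adj_ba : adj (mu a) a. Proof. by rewrite adj_sym. Qed.
Let bp : mu a != p.
Proof. by have := resid_sym aR; rewrite residP eq_sym => /and3P[_ h _]; rewrite eq_sym. Qed.
Let ba : mu a != a. Proof. by rewrite eq_sym (adj_neq adj_irr). Qed.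

Lemma cover_apart s w z : resid p = [set a; s] -> resid q = [set w; z] ->
  s != a -> s != q -> w != z -> mu a \notin resid q ->
  four_cover adj (n - 1).
Proof.
move=> Rp Rq sa sq wz bRq.
have sR : s \in resid p by rewrite Rp !inE eqxx orbT.
have wR : w \in resid q by rewrite Rq !inE eqxx.
have zR : z \in resid q by rewrite Rq !inE eqxx orbT.
have [sp wq zq] : [/\ s != p, w != q & z != q].
  by split; rewrite eq_sym resid_neq.
have qRp : q \notin resid p by rewrite Rp !inE negb_or ![q == _]eq_sym aq sq.
have [wp zp] : w != p /\ z != p.
  by split; apply: contraNneq qRp => e; apply: resid_sym; rewrite -e.
have [wa za ws zs] : [/\ w != a, z != a, w != s & z != s].
  by split; [move: (resid_disjoint aR) | move: (resid_disjoint aR)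
            | move: (resid_disjoint sR) | move: (resid_disjoint sR)];
     apply: contraTneq => <-; rewrite negbK.
have [bs bw bz] : [/\ mu a != s, mu a != w & mu a != z].
  by split; [move: bR; rewrite Rp | move: bRq; rewrite Rq | move: bRq; rewrite Rq];
     apply: contraNneq => ->; rewrite !inE eqxx ?orbT.
have rsp : rho s = p := rho_of sp sq (resid_sym sR).
have rwq : rho w = q := rho_of wp wq (resid_sym wR).
have rzq : rho z = q := rho_of zp zq (resid_sym zR).
have [b'p b'q rb' adj_bb'] := rho_off bp bq bR bRq.
set b' := rho (mu a) in b'p b'q rb' adj_bb'.
have adj_b'b : adj b' (mu a) by rewrite adj_sym.
have [b'a b's b'w b'z] : [/\ b' != a, b' != s, b' != w & b' != z].
  by split; apply/eqP => e; move: rb'; rewrite e ?rap ?rsp ?rwq ?rzq => /eqP;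
     rewrite eq_sym ?(negbTE bp) ?(negbTE bq).
have bb' : mu a != b' by apply: (adj_neq adj_irr).
have adj_qz : adj q z := resid_adj zR.
have adj_ps : adj p s := resid_adj sR.
have adj_wq : adj w q by rewrite adj_sym; apply: resid_adj.
apply: (@two_patch_cover _ _ _ _ Rp Rq a
  [:: (b', mu a); (a, p); (w, q)] s z [:: (mu a, a); (p, s); (q, z)] b' w); settle.
Qed.

Lemma cover_apart_linked s z : resid p = [set a; s] -> resid q = [set mu a; z] ->
  s != a -> s != q -> z != mu a ->
  four_cover adj (n - 1).
Proof.
move=> Rp Rq sa sq zb.
have sR : s \in resid p by rewrite Rp !inE eqxx orbT.
have bRq : mu a \in resid q by rewrite Rq !inE eqxx.
have zR : z \in resid q by rewrite Rq !inE eqxx orbT.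
have [sp zq] : s != p /\ z != q by split; rewrite eq_sym resid_neq.
have qRp : q \notin resid p by rewrite Rp !inE negb_or ![q == _]eq_sym aq sq.
have zp : z != p by apply: contraNneq qRp => e; apply: resid_sym; rewrite -e.
have [za zs] : z != a /\ z != s.
  by split; [move: (resid_disjoint aR) | move: (resid_disjoint sR)];
     apply: contraTneq => <-; rewrite negbK.
have bs : mu a != s by apply: contraNneq bR => ->.
have rsp : rho s = p := rho_of sp sq (resid_sym sR).
have rzq : rho z = q := rho_of zp zq (resid_sym zR).
have rbq : rho (mu a) = q := rho_of bp bq (resid_sym bRq).
have adj_sp : adj s p by rewrite adj_sym; apply: resid_adj.
have adj_qz : adj q z := resid_adj zR.
have adj_bq : adj (mu a) q by rewrite adj_sym; apply: resid_adj.
have [c [c' [cS c'S adj_cc' rc rc']]] :=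
  @fresh_resid_edge _ _ _ _ Rp Rq n4 [:: p; q; a; s; mu a; z] isT ltac:(settle).
notin_list cS; notin_list c'S.
have cc' : c != c' by apply: (adj_neq adj_irr).
apply: (@two_patch_cover _ _ _ _ Rp Rq a
  [:: (s, p); (a, mu a); (q, z)] c c' [:: (p, a); (mu a, q)] s z); settle.
Qed.

Lemma cover_adjacent_linked : resid p = [set a; q] -> resid q = [set p; mu a] ->
  four_cover adj (n - 1).
Proof.
move=> Rp Rq.
have bRq : mu a \in resid q by rewrite Rq !inE eqxx orbT.
have rbq : rho (mu a) = q := rho_of bp bq (resid_sym bRq).
have adj_qb : adj q (mu a) := resid_adj bRq.
have adj_pq : adj p q by apply: resid_adj; rewrite Rp !inE eqxx orbT.
have [c [c' [cS c'S adj_cc' rc rc']]] :=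
  @fresh_resid_edge _ _ _ _ Rp Rq n4 [:: p; q; a; mu a] isT ltac:(settle).
notin_list cS; notin_list c'S.
have cc' : c != c' by apply: (adj_neq adj_irr).
have [d [d' [dS d'S adj_dd' rd rd']]] :=
  @fresh_resid_edge _ _ _ _ Rp Rq n4 [:: p; q; a; mu a; c; c'] isT ltac:(settle).
notin_list dS; notin_list d'S.
have dd' : d != d' by apply: (adj_neq adj_irr).
apply: (@two_patch_cover _ _ _ _ Rp Rq a
  [:: (a, p); (q, mu a)] c c' [:: (p, q); (mu a, a)] d d'); settle.
Qed.

Lemma cover_adjacent y : resid p = [set a; q] -> resid q = [set p; y] ->
  y != p -> mu a != y ->
  four_cover adj (n - 1).
Proof.
move=> Rp Rq yp bny.
have yR : y \in resid q by rewrite Rq !inE eqxx orbT.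
have yq : y != q by rewrite eq_sym resid_neq.
have ya : y != a by move: (resid_disjoint aR); apply: contraTneq => <-; rewrite negbK.
have ryq : rho y = q := rho_of yp yq (resid_sym yR).
have bRq : mu a \notin resid q by rewrite Rq !inE negb_or bp bny.
have [b'p b'q rb' adj_bb'] := rho_off bp bq bR bRq.
set b' := rho (mu a) in b'p b'q rb' adj_bb'.
have adj_b'b : adj b' (mu a) by rewrite adj_sym.
have [b'a b'y] : b' != a /\ b' != y.
  by split; apply/eqP => e; move: rb'; rewrite e ?rap ?ryq => /eqP;
     rewrite eq_sym ?(negbTE bp) ?(negbTE bq).
have bb' : mu a != b' by apply: (adj_neq adj_irr).
have adj_qy : adj q y := resid_adj yR.
have adj_pq : adj p q by apply: resid_adj; rewrite Rp !inE eqxx orbT.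
have [c [c' [cS c'S adj_cc' rc rc']]] :=
  @fresh_resid_edge _ _ _ _ Rp Rq n4 [:: p; q; a; y; mu a; b'] isT ltac:(settle).
notin_list cS; notin_list c'S.
have cc' : c != c' by apply: (adj_neq adj_irr).
apply: (@two_patch_cover _ _ _ _ Rp Rq a
  [:: (b', mu a); (a, p); (q, y)] c c' [:: (mu a, a); (p, q)] b' y); settle.
Qed.

Lemma good_vertex_cover : four_cover adj (n - 1).
Proof.
have [s sa Rp] := resid_pair_p aR.
have [sq|sq] := eqVneq s q.
  subst s; have pRq : p \in resid q by apply: resid_sym; rewrite Rp !inE eqxx orbT.
  have [y yp Rq] := resid_pair_q pRq.
  have [eb|bny] := eqVneq (mu a) y; last exact: cover_adjacent Rp Rq yp bny.
  by apply: cover_adjacent_linked; rewrite // eb.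
have [bRq|bRq] := boolP (mu a \in resid q).
  have [z zb Rq] := resid_pair_q bRq.
  exact: cover_apart_linked Rp Rq sa sq zb.
have /cards2P [w [z [wz Rq]]] : #|resid q| == 2 by rewrite card_resid eqxx orbT.
exact: cover_apart Rp Rq sa sq wz bRq.
Qed.

End GoodVertex.

(* Swapping along [p x] for a residual neighbour [x] of [p]: the matching
   [N - {x, nu x} + {p, x}] leaves [nu x] and [q] uncovered. *)
Definition nu_swap (x : T) t :=
  if t == p then x else if t == x then p else if t == nu x then mu (nu x) else nu t.

Lemma nu_inj t u : t != p -> t != q -> u != p -> u != q -> nu t = nu u -> t = u.
Proof. by move=> tp tq up uq e; rewrite -(nu_inv tp tq) e nu_inv. Qed.

Lemma config_swap x : x \in resid p -> x != q -> config mu (nu_swap x) (nu x) q.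
Proof.
move=> xR xq.
have xp : x != p by rewrite eq_sym resid_neq.
have x'p : nu x != p := nu_neq_p xp xq.
have x'q : nu x != q := nu_neq_q xp xq.
have x'x : nu x != x by rewrite eq_sym (adj_neq adj_irr) ?nu_adj.
have xmp : x != mu p by move: xR; rewrite residP => /and3P[].
split => // [t t1 tq|t t1 tq|||t t1 tq|t t1 tq|t t1 tq].
- rewrite /nu_swap; have [->|tp] := eqVneq t p; first exact: resid_adj.
  have [->|tx] := eqVneq t x; first by rewrite adj_sym; apply: resid_adj.
  by rewrite (negbTE t1); apply: nu_adj.
- rewrite /nu_swap; have [->|tp] := eqVneq t p; first by rewrite (negbTE xp) eqxx.
  have [->|tx] := eqVneq t x; first by rewrite eqxx.
  rewrite (negbTE t1) (negbTE (nu_neq_p tp tq)).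
  have -> : (nu t == x) = false.
    by apply/negbTE; apply: contra t1 => /eqP <-; rewrite nu_inv.
  have -> : (nu t == nu x) = false.
    by apply/negbTE; apply: contra tx => /eqP/nu_inj ->.
  exact: nu_inv.
- by rewrite /nu_swap (negbTE x'p) (negbTE x'x) eqxx.
- by rewrite /nu_swap eq_sym (negbTE pq) eq_sym (negbTE xq) eq_sym (negbTE x'q).
- rewrite /nu_swap; have [_|tp] := eqVneq t p; first by rewrite eq_sym.
  have [_|tx] := eqVneq t x; first by rewrite eq_sym.
  by rewrite (negbTE t1); apply: contra tx => /eqP/nu_inj ->.
- rewrite /nu_swap; have [_|tp] := eqVneq t p; first by [].
  have [_|tx] := eqVneq t x; first by [].
  by rewrite (negbTE t1); apply: nu_neq_q.
- rewrite /nu_swap; have [->|tp] := eqVneq t p; first by [].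
  have [->|tx] := eqVneq t x; first by apply: contra xmp => /eqP ->; rewrite mu_inv.
  by rewrite (negbTE t1); apply: nu_neq_mu.
Qed.

End Residual.
End Configuration.

Section Main.
Variables (T : finType) (adj : rel T).
Hypothesis adj_sym : symmetric adj.
Hypothesis adj_irr : irreflexive adj.
Hypothesis cub : cubic adj.
Hypothesis conn : connected_graph adj.
Variable n : nat.
Hypothesis cardT : #|T| = 2 * n.
Hypothesis n4 : 4 <= n.
Variables (mu nu : T -> T) (p q : T).
Hypothesis cfg : config adj mu nu p q.

Local Notation R := (resid adj mu nu).
Local Notation rho := (rho adj mu nu).
Local Notation R_swap x := (resid adj mu (nu_swap mu nu p x) (nu x)).
Let mu_inv := cf_mu_inv cfg.
Let mu_adj := cf_mu_adj cfg.
Let nu_inv := cf_nu_inv cfg.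
Let nu_neq_p := cf_nu_neq_p cfg.
Let nu_neq_q := cf_nu_neq_q cfg.
Let nu_neq_mu := cf_nu_neq_mu cfg.
Let nu_p := cf_nu_p cfg.
Let nu_q := cf_nu_q cfg.

Lemma mu_neq x : mu x != x.
Proof. by rewrite eq_sym (adj_neq adj_irr (mu_adj x)). Qed.

Lemma good_p a : a \in R p -> a != q -> mu a != q -> mu a \notin R p ->
  four_cover adj (n - 1).
Proof. exact: (@good_vertex_cover _ _ adj_sym adj_irr cub _ _ _ _ cfg _ cardT n4 a). Qed.

Lemma good_q a : a \in R q -> a != p -> mu a != p -> mu a \notin R q ->
  four_cover adj (n - 1).
Proof.
exact: (@good_vertex_cover _ _ adj_sym adj_irr cub _ _ _ _ (config_sym cfg) _ cardT n4 a).
Qed.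

Lemma good_swap x a : x \in R p -> x != q ->
  a \in R_swap x -> a != q -> mu a != q -> mu a \notin R_swap x ->
  four_cover adj (n - 1).
Proof.
by move=> xR xq; apply: (@good_vertex_cover _ _ adj_sym adj_irr cub _ _ _ _
  (config_swap adj_sym adj_irr cfg xR xq) _ cardT n4 a).
Qed.

Lemma resid_swap x y : x \in R p -> x != q ->
  (y \in R_swap x) = adj (nu x) y && (y != mu (nu x)).
Proof.
move=> xR xq; rewrite /resid (cf_nu_p (config_swap adj_sym adj_irr cfg xR xq)).
by rewrite !inE andbA andbb andbC.
Qed.

(* [p] and [q] adjacent, with the other residual neighbours [x] of [p] and
   [y] of [q] being the [M]-partners of [q] and [p]: if [nu x = y], then
   [{p, q, x, y}] would be closed under adjacency, contradicting
   connectivity. *)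
Lemma linked_pair_escape x y : R p = [set q; x] -> R q = [set p; y] ->
  x != q -> y != p -> mu x = q -> mu y = p -> nu x != y.
Proof.
move=> Rp Rq xq yp mxq myp; apply/eqP => x'E.
have xR : x \in R p by rewrite Rp !inE eqxx orbT.
have yR : y \in R q by rewrite Rq !inE eqxx orbT.
have [xp yq] : x != p /\ y != q.
  by split; rewrite eq_sym; [apply: (resid_neq adj_irr xR) | apply: (resid_neq adj_irr yR)].
have mqx : mu q = x by rewrite -mxq mu_inv.
have mpy : mu p = y by rewrite -myp mu_inv.
have ny : nu y = x by rewrite -x'E nu_inv.
have sS : size [:: p; q; x; y] < #|T| by rewrite cardT /=; lia.
have [u [v [uS auv vS]]] := connected_leaves adj_sym conn (mem_head p [:: q; x; y]) sS.
suff : v \in [:: p; q; x; y] by rewrite (negbTE vS).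
case: (neighbour_cases mu nu auv) => [->|->|vR];
  move: uS; rewrite !inE => /or4P[]/eqP eu; subst u;
  rewrite ?nu_p ?nu_q ?mpy ?mqx ?mxq ?myp ?x'E ?ny ?eqxx ?orbT //.
- by move: vR; rewrite Rp !inE => /orP[]/eqP->; rewrite eqxx ?orbT.
- by move: vR; rewrite Rq !inE => /orP[]/eqP->; rewrite eqxx ?orbT.
- rewrite -(rho_of cub cfg xp xq vR).
  by rewrite (rho_of cub cfg xp xq (resid_sym adj_sym cfg xR)) eqxx.
- rewrite -(rho_of cub cfg yp yq vR).
  by rewrite (rho_of cub cfg yp yq (resid_sym adj_sym cfg yR)) eqxx ?orbT.
Qed.

(* In the same situation, swapping [N] along [p x] makes the residual
   neighbour [rho (nu x)] of the new uncovered vertex [nu x] good. *)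
Lemma cover_linked_pair x y : R p = [set q; x] -> R q = [set p; y] ->
  x != q -> y != p -> mu x = q -> mu y = p ->
  four_cover adj (n - 1).
Proof.
move=> Rp Rq xq yp mxq myp.
have x'y := linked_pair_escape Rp Rq xq yp mxq myp.
have xR : x \in R p by rewrite Rp !inE eqxx orbT.
have xp : x != p by rewrite eq_sym (resid_neq adj_irr xR).
have x'p := nu_neq_p xp xq; have x'q := nu_neq_q xp xq.
have nx' : nu (nu x) = x := nu_inv xp xq.
have rR : rho (nu x) \in R (nu x) := rho_resid cub cfg x'p x'q.
set r := rho (nu x) in rR.
have rq : r != q.
  apply/eqP => e; have : nu x \in R q by rewrite -e; exact: (resid_sym adj_sym cfg rR).
  by rewrite Rq !inE (negbTE x'p) (negbTE x'y).
have mrq : mu r != q.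
  apply/eqP => e; have rx : r = x by rewrite -(mu_inv x) mxq -e mu_inv.
  by move: rR; rewrite rx residP nx' eqxx.
move: (rR); rewrite residP => /and3P[_ rm adj_x'r].
apply: (good_swap xR xq (a := r)); rewrite ?resid_swap // ?adj_x'r ?rm //.
apply/negP => /andP[h1 h2]; case: (neighbour_cases mu nu h1) => [e|e|h].
- by rewrite e eqxx in h2.
- by move: rq; rewrite -(mu_inv r) e nx' mxq eqxx.
- by have e : r = mu r := rho_of cub cfg x'p x'q h; move: (mu_neq r); rewrite -e eqxx.
Qed.

Lemma cover_pq_adjacent : q \in R p -> four_cover adj (n - 1).
Proof.
move=> qR; have pR : p \in R q := resid_sym adj_sym cfg qR.
have [x xq Rp] := resid_pair_p cub cfg qR.
have [y yp Rq] := resid_pair_q cub cfg pR.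
have xR : x \in R p by rewrite Rp !inE eqxx orbT.
have yR : y \in R q by rewrite Rq !inE eqxx orbT.
have [mxq|mxq] := eqVneq (mu x) q; last first.
  by apply: (good_p xR xq mxq); rewrite Rp !inE negb_or mxq mu_neq.
have [myp|myp] := eqVneq (mu y) p; last first.
  by apply: (good_q yR yp myp); rewrite Rq !inE negb_or myp mu_neq.
exact: cover_linked_pair Rp Rq xq yp mxq myp.
Qed.

(* [p] and [q] are not adjacent: if neither residual neighbour of [p] is
   good they are [M]-partners, and swapping along [p a] makes [a] good. *)
Lemma cover_pq_apart a : a \in R p -> q \notin R p ->
  four_cover adj (n - 1).
Proof.
move=> aR qR; have [s sa Rp] := resid_pair_p cub cfg aR.
have sR : s \in R p by rewrite Rp !inE eqxx orbT.
have aq : a != q by apply: contraNneq qR => <-.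
have sq : s != q by apply: contraNneq qR => <-.
have [/andP[maq maR]|ga] := boolP ((mu a != q) && (mu a \notin R p)).
  exact: good_p aR aq maq maR.
have [/andP[msq msR]|gs] := boolP ((mu s != q) && (mu s \notin R p)).
  exact: good_p sR sq msq msR.
have mas : mu a = s.
  move: ga gs; rewrite !negb_and !negbK Rp !inE (negbTE (mu_neq a)) (negbTE (mu_neq s)) /= orbF.
  case/orP => [/eqP maq|/eqP //]; case/orP => [/eqP msq|/eqP msa].
    by move: sa; rewrite -(mu_inv s) msq -maq mu_inv eqxx.
  by rewrite -msa mu_inv.
have ap : a != p by rewrite eq_sym (resid_neq adj_irr aR).
apply: (good_swap aR aq (a := a)); rewrite ?resid_swap ?mas //.
  rewrite adj_sym (cf_nu_adj cfg ap aq) /=.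
  by apply: contra (nu_neq_mu ap aq) => /eqP e; rewrite {2}e mu_inv.
apply/negP => /andP[h1 h2]; case: (neighbour_cases mu nu h1) => [e|e|h].
- by rewrite e eqxx in h2.
- by move: sa; rewrite e nu_inv // eqxx.
- have sp : s != p by rewrite eq_sym (resid_neq adj_irr sR).
  move: (nu_neq_p ap aq); rewrite -(rho_of cub cfg sp sq (resid_sym adj_sym cfg h)).
  by rewrite (rho_of cub cfg sp sq (resid_sym adj_sym cfg sR)) eqxx.
Qed.

Lemma config_cover : four_cover adj (n - 1).
Proof.
have [a aR] : exists a, a \in R p.
  by apply/set0Pn; rewrite -card_gt0 (card_resid cub cfg) eqxx.
have [qR|qR] := boolP (q \in R p); first exact: cover_pq_adjacent.
exact: cover_pq_apart aR qR.
Qed.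

End Main.

Section FromMatchings.
Variables (T : finType) (adj : rel T).
Hypothesis adj_sym : symmetric adj.
Hypothesis adj_irr : irreflexive adj.

Lemma uncovered_pair (N : {set {set T}}) n : matching adj N -> #|N| = n - 1 ->
  #|T| = 2 * n -> 0 < n -> exists p q, p != q /\ ~: cover N = [set p; q].
Proof.
move=> Nm cN cardT n0; apply/cards2P.
have := cardsC (cover N); rewrite (card_cover adj_irr Nm) cN cardT => h.
by apply/eqP; lia.
Qed.

Variables (M N : {set {set T}}) (p q : T).
Hypothesis Mp : perfect_matching adj M.
Hypothesis Nm : matching adj N.
Hypothesis MN : M :&: N = set0.
Hypothesis pq : p != q.
Hypothesis uncov : ~: cover N = [set p; q].

Definition nu_of x := if x \in cover N then mate adj N x else mate adj M x.

Lemma config_of_matchings : config adj (mate adj M) nu_of p q.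
Proof.
have Mcov x : x \in cover M by have [e eM xe] := Mp.2 x; apply/bigcupP; exists e.
have Ncov x : x != p -> x != q -> x \in cover N.
  move=> xp xq; move/setP: uncov => /(_ x).
  by rewrite !inE (negbTE xp) (negbTE xq) => /negbFE.
have Nout x : x \in cover N -> (x != p) && (x != q).
  by move=> xN; move/setP: uncov => /(_ x); rewrite !inE xN -negb_or => /esym ->.
have nuE x : x != p -> x != q -> nu_of x = mate adj N x.
  by move=> xp xq; rewrite /nu_of Ncov.
have nu_cov x : x != p -> x != q -> nu_of x \in cover N.
  by move=> xp xq; rewrite nuE //; apply: mate_cover Nm _ (Ncov _ xp xq).
split.
- by move=> x; case/andP: (mateP adj_sym Mp.1 (Mcov x)).
- by move=> x; exact: (mate_inv adj_sym adj_irr Mp.1 (Mcov x)).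
- exact: pq.
- by move=> x xp xq; rewrite nuE //; case/andP: (mateP adj_sym Nm (Ncov _ xp xq)).
- move=> x xp xq; have /andP[x'p x'q] := Nout _ (nu_cov _ xp xq).
  by rewrite nuE // nuE // (mate_inv adj_sym adj_irr Nm (Ncov _ xp xq)).
- by rewrite /nu_of; case: ifP => // /Nout; rewrite eqxx.
- by rewrite /nu_of; case: ifP => // /Nout; rewrite eqxx andbF.
- by move=> x xp xq; case/andP: (Nout _ (nu_cov _ xp xq)).
- by move=> x xp xq; case/andP: (Nout _ (nu_cov _ xp xq)).
move=> x xp xq; apply/eqP => e.
have /andP[_ xN] := mateP adj_sym Nm (Ncov _ xp xq).
have /andP[_ xM] := mateP adj_sym Mp.1 (Mcov x).
have : [set x; mate adj M x] \in M :&: N by rewrite inE xM -e nuE.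
by rewrite MN inE.
Qed.

End FromMatchings.

Theorem lemma2 (T : finType) (adj : rel T) (n : nat) :
  simple_graph adj -> connected_graph adj -> cubic adj ->
  #|T| = 2 * n -> 8 <= 2 * n ->
  (exists M N : {set {set T}},
      perfect_matching adj M /\ matching adj N /\ #|N| = n - 1 /\
      M :&: N = set0) ->
  excessive_index_eq adj (n - 1) 4.
Proof.
move=> [adj_sym adj_irr] conn cub cardT n8 [M [N [Mp [Nm [cN MN]]]]].
have n4 : 4 <= n by lia.
split; last by move=> Ms; exact: (four_le_cover adj_sym adj_irr cub cardT n4).
have [p [q [pq uncov]]] := uncovered_pair adj_irr Nm cN cardT (leq_trans (isT : 0 < 4) n4).
exact: (config_cover adj_sym adj_irr cub conn cardT n4
  (config_of_matchings adj_sym adj_irr Mp Nm MN pq uncov)).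
Qed.
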